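(* Let $t\in\mathbb{Z}_+$ and $\alpha\in(0,1)$. Let $\mathcal{Q}_1,\dots,\mathcal{Q}_t$ be probability distributions on $\mathbb{R}$ with continuous CDFs $F_1,\dots,F_t$. Let $\mathcal{D}_1,\dots,\mathcal{D}_t$ be independent datasets, where $\mathcal{D}_j=\{u_{j,i}\}_{i=1}^{B_j}$ consists of $B_j\ge 1$ i.i.d. samples from $\mathcal{Q}_j$. Fix $k\in\{1,\dots,t\}$ and $\delta\in(0,1)$. Then with probability at least $1-\delta$, $$\big|F_t(\widehat{q}_{t,k})-(1-\alpha)\big|\le \phi(t,k)+\psi(t,k,\delta).$$
   Context: For a CDF $F$ and $\gamma\in(0,1)$, the left $\gamma$-quantile is $\mathsf{Q}^-_\gamma(F)=\inf\{x\in\mathbb{R}:F(x)\ge\gamma\}$. Let $B_{t,k}=\sum_{j=t-k+1}^t B_j$, and let $\widehat{F}_{t,k}(x)=\frac{1}{B_{t,k}}\sum_{j=t-k+1}^t\sum_{i=1}^{B_j}\mathbf{1}\{x\ge u_{j,i}\}$ be the empirical CDF of the data in the last $k$ periods. Define $\widehat{q}_{t,k}=\mathsf{Q}^-_{1-\alpha}(\widehat{F}_{t,k})$, $\phi(t,k)=\max_{t-k+1\le j\le t}\|F_j-F_t\|_\infty$, and $\psi(t,k,\delta)=\frac{5}{4}\sqrt{\frac{2\alpha(1-\alpha)\log(2/\delta)}{B_{t,k}}}+\frac{4\log(2/\delta)}{B_{t,k}}$. *)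

From HB Require Import structures.
From mathcomp Require Import all_boot all_order all_algebra.
From mathcomp Require Import all_classical all_reals all_analysis.
Set Implicit Arguments. Unset Strict Implicit. Unset Printing Implicit Defensive.
Import Order.TTheory GRing.Theory Num.Def Num.Theory.
Import numFieldNormedType.Exports.
Local Open Scope classical_set_scope.
Local Open Scope ring_scope.

Definition dcdf (R : realType) (Q : probability R R) (x : R) : R :=
  fine (Q [set y : R | y <= x]).

Definition left_quantile (R : realType) (g : R) (F : R -> R) : R :=
  inf [set x : R | g <= F x].

Definition sup_dist (R : realType) (F G : R -> R) : R :=
  sup [set `|F x - G x| | x in [set: R]].

Definition mutually_independent d (T : measurableType d) (R : realType)
  (P : probability T R) (K : eqType) (I : set K) (X : K -> {RV P >-> R}) :=
  forall (s : seq K), (forall k, k \in s -> I k) -> uniq s ->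
  forall A : K -> set R, (forall k, measurable (A k)) ->
  P (\bigcap_(k in [set k | k \in s]) (X k @^-1` A k)) =
    (\prod_(k <- s) P (X k @^-1` A k))%E.

From HB Require Import structures.
From mathcomp Require Import all_boot all_order all_algebra.
From mathcomp Require Import all_classical all_reals all_analysis.
From mathcomp Require Import ring lra zify.
Set Implicit Arguments. Unset Strict Implicit. Unset Printing Implicit Defensive.
Import Order.TTheory GRing.Theory Num.Def Num.Theory.
Import numFieldNormedType.Exports.
Local Open Scope classical_set_scope.
Local Open Scope ring_scope.

(* Pool the windowed samples into n independent observations with CDFs F_j,
   and let Fbar be the average of these CDFs.  For fixed x, n * Fhat(x) is a
   sum of independent Bernoulli variables with mean n * Fbar(x), so the
   Chernoff method, with e^y <= 1 + y + 25/32 y^2 on [-1/2, 1/2] and the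
   variance bounded through Fbar(x), gives a Bernstein bound for its
   deviations.  Since Fbar is continuous it takes the values 1 - alpha +- psi;
   applying the bound at these two points shows that, outside an event of
   probability delta, the empirical quantile lies between them, i.e.
   |Fbar(qhat) - (1 - alpha)| <= psi.  Finally |F_t - Fbar| <= phi pointwise. *)

Lemma sumr_const_seq (V : nmodType) (I : Type) (r : seq I) (x : V) :
  \sum_(i <- r) x = x *+ size r.
Proof. by rewrite big_const_seq count_predT iter_addr_0. Qed.

Section BernsteinBound.
Variable R : realType.

Lemma expR_mul_1B_le1 (y : R) : expR y * (1 - y) <= 1.
Proof.
by have := expR_ge1Dx (- y); rewrite -(ler_pM2l (expR_gt0 y)) -expRD subrr expR0.
Qed.

Lemma expR_le_quad (x : R) : -(1/2) <= x <= 1/2 -> expR x <= 1 + x + 25/32 * x ^+ 2.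
Proof.
move=> /andP[xlo xhi]; set y := x / 8.
have xE : x = 8 * y by rewrite /y; field.
have y_small : -(1/16) <= y <= 1/16 by rewrite /y; apply/andP; split; lra.
have y8_gt0 : 0 < (1 - y) ^+ 8 by apply: exprn_gt0; lra.
(* [expR y <= 1 / (1 - y)], raised to the 8th power, is compared with a
   polynomial of degree 10 that is >= 1 on [-1/16, 1/16]. *)
have exp_le : expR x * (1 - y) ^+ 8 <= 1.
  rewrite xE expRM_natl -exprMn; apply: exprn_ile1; last exact: expR_mul_1B_le1.
  by rewrite mulr_ge0 ?expR_ge0 //; lra.
have poly_ge : 1 <= (1 + 8 * y + 50 * y ^+ 2) * (1 - y) ^+ 8.
  have -> : (1 + 8 * y + 50 * y ^+ 2) * (1 - y) ^+ 8 = 1 + y ^+ 2 * (14 - 232 * y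
      + 1022 * y ^+ 2 - 2296 * y ^+ 3 + 3080 * y ^+ 4 - 2584 * y ^+ 5
      + 1337 * y ^+ 6 - 392 * y ^+ 7 + 50 * y ^+ 8) by ring.
  move: y_small => /andP[ylo yhi].
  have : 0 <= 14 - 232 * y + 1022 * y ^+ 2 - 2296 * y ^+ 3 + 3080 * y ^+ 4
      - 2584 * y ^+ 5 + 1337 * y ^+ 6 - 392 * y ^+ 7 + 50 * y ^+ 8 by nra.
  by have := sqr_ge0 y; nra.
rewrite -(ler_pM2r y8_gt0); apply: le_trans exp_le (le_trans poly_ge _).
suff -> : 1 + x + 25/32 * x ^+ 2 = 1 + 8 * y + 50 * y ^+ 2 by [].
by rewrite xE; field.
Qed.

Lemma bernoulli_mgf_le (p l : R) : 0 <= p <= 1 -> -(1/2) <= l <= 1/2 ->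
  (1 - p) * expR (- (l * p)) + p * expR (l * (1 - p))
    <= expR (25/32 * l ^+ 2 * (p * (1 - p))).
Proof.
move=> /andP[p0 p1] /andP[l0 l1].
have e1 : expR (- (l * p)) <= 1 - l * p + 25/32 * (l * p) ^+ 2.
  by rewrite -sqrrN; apply: expR_le_quad; apply/andP; split; nra.
have e2 : expR (l * (1 - p)) <= 1 + l * (1 - p) + 25/32 * (l * (1 - p)) ^+ 2.
  by apply: expR_le_quad; apply/andP; split; nra.
apply: le_trans (expR_ge1Dx _).
have q0 : 0 <= 1 - p by lra.
apply: le_trans (lerD (ler_wpM2l q0 e1) (ler_wpM2l p0 e2)) _.
by rewrite le_eqVlt; apply/orP; left; apply/eqP; ring.
Qed.

(* [pb_tail ps a] is the probability that a sum of independent Bernoulli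
   variables with parameters [ps] is at least [a]. *)
Fixpoint pb_tail (ps : seq R) (a : R) : R :=
  if ps is p :: ps' then p * pb_tail ps' (a - 1) + (1 - p) * pb_tail ps' a
  else ((a <= 0)%R)%:R.

Definition prob_seq (ps : seq R) := all (fun p => 0 <= p <= 1) ps.

Lemma pb_tail_le_mgf (ps : seq R) (l a : R) : prob_seq ps -> 0 <= l ->
  pb_tail ps a <= expR (- (l * a)) * \prod_(p <- ps) (1 - p + p * expR l).
Proof.
move=> + l0; elim: ps a => [|p ps IH] a /=.
  rewrite big_nil mulr1; case: (boolP (a <= 0)) => [a0 _|_ _]; last exact: expR_ge0.
  by rewrite -expR0 ler_expR; nra.
move=> /andP[/andP[p0 p1] ps01]; rewrite big_cons.
have q0 : 0 <= 1 - p by lra.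
apply: le_trans (lerD (ler_wpM2l p0 (IH (a - 1) ps01)) (ler_wpM2l q0 (IH a ps01))) _.
have -> : expR (- (l * (a - 1))) = expR (- (l * a)) * expR l.
  by rewrite -expRD; congr expR; ring.
by rewrite le_eqVlt; apply/orP; left; apply/eqP; ring.
Qed.

Lemma pb_tail_chernoff (ps : seq R) (l a : R) : prob_seq ps -> 0 <= l <= 1/2 ->
  pb_tail ps a <= expR (- (l * (a - \sum_(p <- ps) p))
                        + 25/32 * l ^+ 2 * \sum_(p <- ps) (p * (1 - p))).
Proof.
move=> ps01 /andP[l0 l1]; apply: le_trans (pb_tail_le_mgf a ps01 l0) _.
have -> : expR (- (l * (a - \sum_(p <- ps) p))
              + 25/32 * l ^+ 2 * \sum_(p <- ps) (p * (1 - p)))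
    = expR (- (l * a))
      * expR (\sum_(p <- ps) (l * p + 25/32 * l ^+ 2 * (p * (1 - p)))).
  by rewrite -expRD; congr expR; rewrite big_split /= -!mulr_sumr; ring.
rewrite ler_pM2l ?expR_gt0 // expR_sum.
elim: ps ps01 => [|p ps IH]; first by rewrite !big_nil.
move=> /= /andP[/andP[p0 p1] ps01]; rewrite !big_cons.
have mgf_ge0 (q : R) : 0 <= q <= 1 -> 0 <= 1 - q + q * expR l.
  by move=> /andP[q0 q1]; have := expR_gt0 l; nra.
apply: ler_pM; [exact/mgf_ge0/andP | | | exact: IH].
- by rewrite big_seq prodr_ge0 // => q /(allP ps01)/mgf_ge0.
- have -> : 1 - p + p * expR l = expR (l * p)
      * ((1 - p) * expR (- (l * p)) + p * expR (l * (1 - p))).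
    rewrite mulrDr !mulrA ![expR (l * p) * _]mulrC -!mulrA -!expRD.
    by rewrite subrr expR0 mulr1 -mulrDr subrKC mulr1.
  rewrite expRD ler_pM2l ?expR_gt0 //.
  by apply: bernoulli_mgf_le; apply/andP; split; lra.
Qed.

Lemma sum_bernoulli_var_le (ps : seq R) :
  (size ps)%:R * \sum_(p <- ps) (p * (1 - p))
    <= (size ps)%:R * \sum_(p <- ps) p - (\sum_(p <- ps) p) ^+ 2.
Proof.
have [->|ps_ne] := eqVneq ps [::]; first by rewrite !big_nil /= !mul0r expr0n subrr.
set n := (size ps)%:R; set mu := \sum_(p <- ps) p.
have n0 : 0 < n by rewrite ltr0n lt0n size_eq0.
have : 0 <= \sum_(p <- ps) (n * p - mu) ^+ 2 by apply: sumr_ge0 => p _; exact: sqr_ge0.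
have -> : \sum_(p <- ps) (n * p - mu) ^+ 2
    = \sum_(p <- ps) (n ^+ 2 * p ^+ 2 - (2 * n * mu) * p + mu ^+ 2).
  by apply: eq_bigr => p _; ring.
rewrite !big_split /= sumrN -!mulr_sumr sumr_const_seq -mulr_natr -/n -/mu.
have -> : \sum_(p <- ps) (p * (1 - p)) = mu - \sum_(p <- ps) p ^+ 2.
  by rewrite /mu -sumrB; apply: eq_bigr => p _; ring.
move=> h; suff : mu ^+ 2 <= n * \sum_(p <- ps) p ^+ 2 by nra.
by rewrite -(ler_pM2l n0); nra.
Qed.

Definition bernstein_radius (g L n : R) := 5/4 * Num.sqrt (2 * g * L / n) + 4 * L / n.

Lemma bernstein_radius_ok (g L n : R) : 0 < n -> 0 <= g -> 0 < L ->
  4 * L / n <= bernstein_radius g L n /\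
  4 * (25/32) * L * (g + bernstein_radius g L n) <= n * bernstein_radius g L n ^+ 2.
Proof.
move=> n0 g0 L0; set e := bernstein_radius g L n.
set s := Num.sqrt (2 * g * L / n); set l := L / n.
have s0 : 0 <= s := sqrtr_ge0 _.
have l0 : 0 < l by apply: divr_gt0.
have eE : e = 5/4 * s + 4 * l by rewrite /e /bernstein_radius /l mulrA.
split; first by rewrite eE /l mulrA; lra.
have gl : g * l = s ^+ 2 / 2.
  rewrite /s sqr_sqrtr; first by rewrite /l; field; exact: lt0r_neq0.
  by apply: divr_ge0; [nra | exact: ltW].
have -> : 4 * (25/32) * L * (g + e) = n * (4 * (25/32) * l * (g + e)).
  by rewrite /l; field; exact: lt0r_neq0.
rewrite ler_pM2l // eE.
have -> : 4 * (25/32) * l * (g + (5/4 * s + 4 * l))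
    = 25/8 * (g * l) + 125/32 * (s * l) + 25/2 * l ^+ 2 by field.
rewrite gl; have := mulr_ge0 s0 (ltW l0); have := sqr_ge0 l; nra.
Qed.

Lemma exists_chernoff_rate (n g e L v : R) : 0 < n -> 0 <= g -> 0 < L ->
  0 <= v <= n * (g + e) -> 4 * L / n <= e -> 4 * (25/32) * L * (g + e) <= n * e ^+ 2 ->
  exists2 l, 0 <= l <= 1/2 & - (l * (n * e)) + 25/32 * l ^+ 2 * v <= - L.
Proof.
move=> n0 g0 L0 /andP[v0 v1] eL eq.
have e0 : 0 < e by apply: lt_le_trans eL; apply: divr_gt0 => //; lra.
have ge0 : 0 < g + e by lra.
have neL : 4 * L <= n * e by rewrite -ler_pdivrMl // mulrC.
have v1' : 25/32 * v <= 25/32 * (n * (g + e)) by lra.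
(* the unconstrained minimiser of the exponent, capped at [1/2] *)
case: (leP (e / (2 * (25/32) * (g + e))) (1/2)) => hl.
  exists (e / (2 * (25/32) * (g + e))); first by rewrite hl divr_ge0 //; lra.
  set l := e / _ in hl *.
  have l0 : 0 <= l by rewrite /l divr_ge0 //; lra.
  have lE : l * (2 * (25/32) * (g + e)) = e by rewrite /l divfK //; lra.
  have : 25/32 * l ^+ 2 * v <= l ^+ 2 * (25/32 * (n * (g + e))).
    by have := sqr_ge0 l; nra.
  have -> : l ^+ 2 * (25/32 * (n * (g + e))) = l * (n * e) / 2.
    by rewrite -[in RHS]lE; field.
  suff : L <= l * (n * e) / 2 by lra.
  have -> : l * (n * e) / 2 = n * e ^+ 2 / (4 * (25/32) * (g + e)).
    by rewrite /l; field; lra.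
  by rewrite ler_pdivlMr; lra.
exists (1/2); first by apply/andP; split; lra.
move: hl; rewrite ltr_pdivlMr; last lra.
move=> hl; have : 25/32 * v <= n * e by nra.
rewrite expr2; lra.
Qed.

Lemma pb_tail_bernstein (ps : seq R) (c L : R) : prob_seq ps -> (0 < size ps)%N ->
  0 <= c <= 1 -> 0 < L ->
  let n := (size ps)%:R in
  \sum_(p <- ps) p = n * (c - bernstein_radius (c * (1 - c)) L n) ->
  pb_tail ps (n * c) <= expR (- L).
Proof.
move=> ps01 ps_gt0 /andP[c0 c1] L0 n muE.
set e := bernstein_radius _ _ _ in muE.
have n0 : 0 < n by rewrite ltr0n.
have g0 : 0 <= c * (1 - c) by apply: mulr_ge0; lra.
have [eL eq] := bernstein_radius_ok n0 g0 L0.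
have e0 : 0 < e by apply: lt_le_trans eL; apply: divr_gt0 => //; lra.
set v := \sum_(p <- ps) (p * (1 - p)).
have v0 : 0 <= v.
  by rewrite /v big_seq sumr_ge0 // => p /(allP ps01)/andP[p0 p1]; apply: mulr_ge0; lra.
have vle : v <= n * (c * (1 - c) + e).
  rewrite -(ler_pM2l n0); apply: le_trans (sum_bernoulli_var_le ps) _.
  rewrite -/n muE -subr_ge0.
  have -> : n * (n * (c * (1 - c) + e)) - (n * (n * (c - e)) - (n * (c - e)) ^+ 2)
      = (n * n) * (e * (2 - 2 * c + e)) by ring.
  by apply: mulr_ge0; [nra | apply: mulr_ge0; lra].
have [l l01 rate] := exists_chernoff_rate n0 g0 L0 (introT andP (conj v0 vle)) eL eq.
apply: le_trans (pb_tail_chernoff (n * c) ps01 l01) _.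
by rewrite ler_expR muE (_ : n * c - n * (c - e) = n * e) //; ring.
Qed.
End BernsteinBound.

Section IndependentCount.
Context d (T : measurableType d) (R : realType) (P : probability T R)
  (K : eqType) (I : set K) (X : K -> {RV P >-> R}) (S : K -> set R).
Hypothesis indep : mutually_independent I X.
Hypothesis mS : forall k, measurable (S k).

Definition count_in (s : seq K) (w : T) : R := \sum_(k <- s) (X k w \in S k)%:R.

Definition prob_in (k : K) : R := fine (P (X k @^-1` S k)).

Definition cap_preimage (r : seq K) (A : K -> set R) : set T :=
  \bigcap_(k in [set k | k \in r]) (X k @^-1` A k).

Lemma cap_preimage_nil A : cap_preimage [::] A = setT.
Proof. by apply/seteqP; split => w //= _ k; rewrite /= in_nil. Qed.

Lemma cap_preimage_cons y r A :
  cap_preimage (y :: r) A = X y @^-1` A y `&` cap_preimage r A.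
Proof.
apply/seteqP; split => w /=.
  by move=> h; split=> [|k /= kr]; apply: h; rewrite /= in_cons ?eqxx ?kr ?orbT.
by move=> [h1 h2] k /=; rewrite in_cons => /orP[/eqP -> //|]; exact: h2.
Qed.

Lemma measurable_cap_preimage r A : (forall k, measurable (A k)) ->
  measurable (cap_preimage r A).
Proof.
move=> mA; elim: r => [|y r IH]; first by rewrite cap_preimage_nil.
by rewrite cap_preimage_cons; apply: measurableI => //; exact: measurable_funPTI.
Qed.

Lemma cap_preimage_cons_upd y r A B : y \notin r ->
  cap_preimage (y :: r) (fun k => if k == y then B else A k)
    = X y @^-1` B `&` cap_preimage r A.
Proof.
move=> yr; rewrite cap_preimage_cons eqxx; congr (_ `&` _).
by apply: eq_bigcapr => k /= kr; case: eqP => // ky; rewrite -ky kr in yr.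
Qed.

Lemma prob_cap_preimage_cons y r A B : uniq (y :: r) -> (forall k, k \in y :: r -> I k) ->
  (forall k, measurable (A k)) -> measurable B ->
  P (X y @^-1` B `&` cap_preimage r A) = (P (X y @^-1` B) * P (cap_preimage r A))%E.
Proof.
move=> /[dup] uyr /= /andP[yr ur] yrI mA mB.
have mA' k : measurable (if k == y then B else A k) by case: ifP.
have rI k : k \in r -> I k by move=> kr; apply: yrI; rewrite in_cons kr orbT.
rewrite -cap_preimage_cons_upd // (indep yrI uyr mA') big_cons eqxx.
rewrite (indep rI ur mA).
congr (_ * _)%E; apply: eq_big_seq => k kr.
by case: eqP => // ky; rewrite -ky kr in yr.
Qed.

Lemma count_in_cons y s w : count_in (y :: s) w = (X y w \in S y)%:R + count_in s w.
Proof. by rewrite /count_in big_cons. Qed.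

Lemma count_ge_nil a : [set w | a <= count_in [::] w] = if a <= 0 then setT else set0.
Proof.
apply/seteqP; split => w /=; rewrite /count_in big_nil;
  by case: ifPn => // /negbTE ->.
Qed.

Lemma count_ge_cons y s a : [set w | a <= count_in (y :: s) w] =
  (X y @^-1` S y `&` [set w | a - 1 <= count_in s w]) `|`
  (X y @^-1` (~` S y) `&` [set w | a <= count_in s w]).
Proof.
apply/seteqP; split => w /=; rewrite count_in_cons.
  case: (boolP (X y w \in S y)) => [/set_mem Sy|/negP nSy] /= h.
    by left; split => //; lra.
  by right; split=> [/mem_set//|]; rewrite add0r in h.
by case=> -[Sy h]; rewrite ?(mem_set Sy) ?(memNset Sy) /=; lra.
Qed.

Lemma measurable_count_ge s a : measurable [set w | a <= count_in s w].
Proof.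
elim: s a => [|y s IH] a; first by rewrite count_ge_nil; case: ifP.
rewrite count_ge_cons; apply: measurableU; apply: measurableI => //;
  apply: measurable_funPTI => //; exact: measurableC.
Qed.

Lemma prob_in_01 k : 0 <= prob_in k <= 1.
Proof.
have mXS : measurable (X k @^-1` S k) by exact: measurable_funPTI.
rewrite fine_ge0 ?measure_ge0 //= -[1]/(fine 1%E) fine_le ?fin_num_measure //.
exact: probability_le1.
Qed.

(* Conditioning on the coordinates in [r] is what lets the induction peel the
   head of [s] off into [r]. *)
Lemma prob_cap_count_ge s : forall r A a,
  uniq (r ++ s) -> (forall k, k \in r ++ s -> I k) -> (forall k, measurable (A k)) ->
  P (cap_preimage r A `&` [set w | a <= count_in s w])
    = (P (cap_preimage r A) * (pb_tail (map prob_in s) a)%:E)%E.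
Proof.
elim: s => [|y s IH] r A a urs rsI mA.
  by rewrite count_ge_nil /=; case: ifP => _; rewrite ?setIT ?mule1 ?setI0 ?measure0 ?mule0.
have uyrs : uniq ((y :: r) ++ s) by move: urs; rewrite -cat1s uniq_catCA.
have yrsI k : k \in (y :: r) ++ s -> I k.
  by rewrite mem_cat in_cons -orbA orbCA -in_cons -mem_cat; exact: rsI.
have uyr : uniq (y :: r) by move: uyrs; rewrite cat_uniq => /andP[].
have yrI k : k \in y :: r -> I k by move=> kyr; apply: yrsI; rewrite mem_cat kyr.
have split_y B b : measurable B ->
    P (cap_preimage r A `&` (X y @^-1` B `&` [set w | b <= count_in s w]))
    = (P (X y @^-1` B) * P (cap_preimage r A) * (pb_tail (map prob_in s) b)%:E)%E.
  move=> mB; have mA' k : measurable (if k == y then B else A k) by case: ifP.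
  have yr : y \notin r by move: uyr => /andP[].
  rewrite setIA [cap_preimage r A `&` _]setIC -cap_preimage_cons_upd // IH //.
  by rewrite cap_preimage_cons_upd // prob_cap_preimage_cons.
have mC := measurable_cap_preimage r mA.
have mXS : measurable (X y @^-1` S y) by exact: measurable_funPTI.
have mE B b : measurable B ->
    measurable (cap_preimage r A `&` (X y @^-1` B `&` [set w | b <= count_in s w])).
  move=> mB; apply: measurableI => //.
  by apply: measurableI; [exact: measurable_funPTI | exact: measurable_count_ge].
rewrite count_ge_cons setIUr.
set E1 := _ `&` (_ `&` _); set E2 := _ `&` (_ `&` _).
transitivity (P E1 + P E2)%E.
  apply: measureU; [exact: mE | exact/mE/measurableC|].
  by apply/seteqP; split => w //= [[_ [? _]] [_ [? _]]].
rewrite /E1 /E2 split_y // split_y; last exact: measurableC.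
rewrite -preimage_setC probability_setC //.
rewrite -[P (X y @^-1` S y)]fineK ?fin_num_measure //.
rewrite -[P (cap_preimage r A)]fineK ?fin_num_measure // -EFinB.
by rewrite -!EFinM -EFinD /prob_in /=; congr (_%:E); ring.
Qed.

Lemma prob_count_ge s a : uniq s -> (forall k, k \in s -> I k) ->
  P [set w | a <= count_in s w] = (pb_tail (map prob_in s) a)%:E.
Proof.
move=> us sI.
have := @prob_cap_count_ge s [::] (fun _ => setT) a us sI (fun _ => measurableT).
by rewrite cap_preimage_nil setTI probability_setT mul1e.
Qed.

Lemma count_bernstein s (c L : R) : uniq s -> (forall k, k \in s -> I k) ->
  (0 < size s)%N -> 0 <= c <= 1 -> 0 < L ->
  let n := (size s)%:R in
  \sum_(k <- s) prob_in k = n * (c - bernstein_radius (c * (1 - c)) L n) ->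
  (P [set w | (n * c <= count_in s w)%R] <= (expR (- L))%:E)%E.
Proof.
move=> us sI s_gt0 c01 L0 n muE; rewrite prob_count_ge // lee_fin.
have ps01 : prob_seq (map prob_in s).
  by apply/allP => _ /mapP[k _ ->]; exact: prob_in_01.
have := pb_tail_bernstein ps01 _ c01 L0; rewrite size_map big_map; exact.
Qed.

End IndependentCount.

Section DistributionFunction.
Context (R : realType) (Q : probability R R).

Lemma measurable_set_le (x : R) : measurable [set y : R | y <= x].
Proof.
rewrite (_ : [set y | y <= x] = `]-oo, x]%classic); first exact: measurable_itv.
by apply/seteqP; split => y /=; rewrite in_itv.
Qed.

Lemma dcdf_ge0 x : 0 <= dcdf Q x.
Proof. exact/fine_ge0/measure_ge0. Qed.

Lemma dcdf_le1 x : dcdf Q x <= 1.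
Proof.
rewrite -[1]/(fine 1%E) fine_le ?fin_num_measure //; first exact: measurable_set_le.
by apply: probability_le1; exact: measurable_set_le.
Qed.

Lemma dcdf_nondecreasing : {homo dcdf Q : x y / x <= y}.
Proof.
move=> x y xy; rewrite fine_le ?fin_num_measure ?le_measure ?inE //;
  try exact: measurable_set_le.
by move=> z /= /le_trans; apply.
Qed.

Lemma in_set_le (a x : R) : (a \in [set y : R | y <= x]) = (a <= x).
Proof. by apply/idP/idP => [/set_mem //|]; exact: mem_set. Qed.

(* The identity of (R, Q) is a random variable with cdf [dcdf Q]; this gives
   access to the library's limits of cdfs. *)
Let idR : R -> R := idfun.
#[local] HB.instance Definition _ :=
  @isMeasurableFun.Build _ _ _ _ idR (@measurable_id _ _ setT).

Let dcdfE x : dcdf Q x = fine (cdf (idR : {RV Q >-> R}) x).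
Proof.
by rewrite /cdf /dcdf /=; congr (fine (Q _)); apply/seteqP; split => y /=; rewrite in_itv.
Qed.

Lemma dcdf_cvgNy : dcdf Q x @[x --> -oo] --> 0.
Proof.
under eq_fun do rewrite dcdfE; apply: fine_cvg; exact: cvg_cdfNy0.
Qed.

Lemma dcdf_cvgy : dcdf Q x @[x --> +oo] --> (1 : R).
Proof.
under eq_fun do rewrite dcdfE; apply: fine_cvg; exact: cvg_cdfy1.
Qed.

End DistributionFunction.

Section EmpiricalQuantile.
Context d (T : measurableType d) (R : realType) (P : probability T R)
  (K : eqType) (I : set K) (X : K -> {RV P >-> R}) (Q : K -> probability R R)
  (s : seq K).
Hypothesis indep : mutually_independent I X.
Hypothesis s_uniq : uniq s.
Hypothesis s_I : forall k, k \in s -> I k.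
Hypothesis s_gt0 : (0 < size s)%N.
Hypothesis X_law : forall k, k \in s ->
  forall A, measurable A -> P (X k @^-1` A) = Q k A.
Hypothesis Q_cont : forall k, k \in s -> continuous (dcdf (Q k)).

Local Notation n := ((size s)%:R : R).
Local Notation le_set x := (fun _ : K => [set y : R | y <= x]).
Local Notation gt_set x := (fun _ : K => ~` [set y : R | y <= x]).

Definition ecdf (w : T) (x : R) : R := (\sum_(k <- s) ((X k w <= x)%R%:R : R)) / n.

Definition avg_cdf (x : R) : R := (\sum_(k <- s) dcdf (Q k) x) / n.

Let n_gt0 : 0 < n. Proof. by rewrite ltr0n. Qed.

Lemma ecdfE w x : ecdf w x = count_in X (le_set x) s w / n.
Proof.
by congr (_ / _); apply: eq_bigr => k _; rewrite in_set_le.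
Qed.

Lemma count_le_add_gt w x :
  count_in X (le_set x) s w + count_in X (gt_set x) s w = n.
Proof.
rewrite -big_split -sum1_size natr_sum; apply: eq_bigr => k _ /=.
by rewrite in_setC in_set_le; case: (X k w <= x); rewrite ?addr0 ?add0r.
Qed.

Lemma sum_prob_le x : \sum_(k <- s) prob_in X (le_set x) k = n * avg_cdf x.
Proof.
rewrite /avg_cdf mulrC divfK ?lt0r_neq0 //; apply: eq_big_seq => k ks.
by rewrite /prob_in X_law //; exact: measurable_set_le.
Qed.

Lemma sum_prob_gt x : \sum_(k <- s) prob_in X (gt_set x) k = n * (1 - avg_cdf x).
Proof.
rewrite mulrBr mulr1 -sum_prob_le -sum1_size natr_sum -sumrB.
apply: eq_big_seq => k ks; have mle := measurable_set_le x.
rewrite /prob_in -preimage_setC probability_setC; last exact: measurable_funPTI.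
by rewrite -[P (X k @^-1` _)]fineK ?fin_num_measure //; last exact: measurable_funPTI.
Qed.

Lemma ecdf_nondecreasing w : {homo ecdf w : x y / x <= y}.
Proof.
move=> x y xy; rewrite ler_pM2r ?invr_gt0 //; apply: ler_sum => k _.
by case: (boolP (X k w <= x)) => [/le_trans/(_ xy) -> //|_]; rewrite ler0n.
Qed.

Lemma avg_cdf_nondecreasing : {homo avg_cdf : x y / x <= y}.
Proof.
move=> x y xy; rewrite ler_pM2r ?invr_gt0 //.
by apply: ler_sum => k _; exact: dcdf_nondecreasing.
Qed.

Lemma avg_cdf_ge0 x : 0 <= avg_cdf x.
Proof. by rewrite divr_ge0 ?sumr_ge0 // => k _; exact: dcdf_ge0. Qed.

Lemma avg_cdf_le1 x : avg_cdf x <= 1.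
Proof.
rewrite ler_pdivrMr // mul1r -sum1_size natr_sum.
by apply: ler_sum => k _; exact: dcdf_le1.
Qed.

Let avg_cdf_cvg (F : set_system R) (l : K -> R) : Filter F ->
  (forall k, k \in s -> dcdf (Q k) x @[x --> F] --> l k) ->
  avg_cdf x @[x --> F] --> (\sum_(k <- s) l k) / n.
Proof.
move=> FF Ql; apply: cvgM; last exact: cvg_cst.
rewrite big_seq; under eq_cvg do rewrite big_seq.
by apply: cvg_big => //; exact: add_continuous.
Qed.

Let avg_cdf_cvg_cst (F : set_system R) (l : R) : Filter F ->
  (forall k, dcdf (Q k) x @[x --> F] --> l) -> avg_cdf x @[x --> F] --> l.
Proof.
move=> FF Ql; rewrite -[l](mulfK (lt0r_neq0 n_gt0)) mulr_natr -sumr_const_seq.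
exact: avg_cdf_cvg.
Qed.

Lemma avg_cdf_continuous : continuous avg_cdf.
Proof. by move=> x; apply: avg_cdf_cvg => k ks; exact: Q_cont. Qed.

Lemma avg_cdf_onto c : 0 < c < 1 -> exists x, avg_cdf x = c.
Proof.
move=> /andP[c0 c1].
have [a avg_a] : exists a, avg_cdf a < c.
  have : \forall x \near -oo, avg_cdf x < c.
    exact: cvgr_lt (avg_cdf_cvg_cst _ (fun k => dcdf_cvgNy (Q k))) _ c0.
  by move=> /filter_ex[a ?]; exists a.
have [b avg_b] : exists b, c < avg_cdf b.
  have : \forall x \near +oo, c < avg_cdf x.
    exact: cvgr_gt (avg_cdf_cvg_cst _ (fun k => dcdf_cvgy (Q k))) _ c1.
  by move=> /filter_ex[b ?]; exists b.
have ab : a <= maxr a b by rewrite le_max lexx.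
have avg_ab : c < avg_cdf (maxr a b).
  by apply: lt_le_trans avg_b _; apply: avg_cdf_nondecreasing; rewrite le_max lexx orbT.
have c_between : minr (avg_cdf a) (avg_cdf (maxr a b)) <= c
    <= maxr (avg_cdf a) (avg_cdf (maxr a b)).
  by rewrite ge_min le_max (ltW avg_a) (ltW avg_ab) orbT.
have [x _ avg_x] := IVT ab (continuous_subspaceT avg_cdf_continuous) c_between.
by exists x.
Qed.

Let bound w := \sum_(k <- s) `|X k w|.

Let le_bound w k : k \in s -> `|X k w| <= bound w.
Proof.
by move=> ks; rewrite /bound (big_rem k ks) /= lerDl sumr_ge0.
Qed.

Lemma ecdf_quantile_le g w x : 0 < g -> g <= ecdf w x ->
  left_quantile g (ecdf w) <= x.
Proof.
move=> g0 gx; apply: ge_inf => //; exists (- bound w) => y /= gy.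
rewrite leNgt; apply/negP => y_small; move: gy; rewrite /ecdf big_seq big1 ?mul0r.
  by rewrite leNgt g0.
move=> k ks; apply/eqP; rewrite pnatr_eq0 eqb0 -ltNge.
by have := le_bound w ks; rewrite ler_norml => /andP[? _]; lra.
Qed.

Lemma ecdf_quantile_lt g w x : g <= 1 -> left_quantile g (ecdf w) < x ->
  exists2 y, g <= ecdf w y & y < x.
Proof.
move=> g1 qx; apply: inf_lt qx; exists (bound w) => /=.
rewrite /ecdf big_seq (eq_bigr (fun=> 1)) -?big_seq ?sumr_const_seq ?mulr1n ?divff //.
  exact: lt0r_neq0.
by move=> k ks; have := le_bound w ks; rewrite ler_norml => /andP[_ ->].
Qed.

Let radius_gt0 g L : 0 <= g -> 0 < L -> 0 < bernstein_radius g L n.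
Proof.
move=> g0 L0; have [+ _] := bernstein_radius_ok n_gt0 g0 L0.
by apply: lt_le_trans; rewrite divr_gt0 // mulr_gt0.
Qed.

Lemma avg_cdf_quantile_upper g L : 0 < g < 1 -> 0 < L ->
  exists2 E : set T, measurable E /\ (P E <= (expR (- L))%:E)%E &
    forall w, ~ E w ->
      avg_cdf (left_quantile g (ecdf w)) <= g + bernstein_radius (g * (1 - g)) L n.
Proof.
move=> /andP[g0 g1] L0; set e := bernstein_radius _ _ _.
have e0 : 0 < e by apply: radius_gt0 => //; apply: mulr_ge0; lra.
have [ge1|ge1] := leP 1 (g + e).
  exists set0; first by rewrite measure0 lee_fin expR_ge0.
  by move=> w _; exact: le_trans (avg_cdf_le1 _) ge1.
have [x avg_x] : exists x, avg_cdf x = g + e by apply: avg_cdf_onto; lra.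
have m_gt k : measurable (gt_set x k) by apply: measurableC; exact: measurable_set_le.
exists [set w | (n * (1 - g) <= count_in X (gt_set x) s w)%R].
  split; first exact: measurable_count_ge.
  apply: (count_bernstein indep m_gt) => //; first by apply/andP; split; lra.
  rewrite sum_prob_gt avg_x (_ : (1 - g) * (1 - (1 - g)) = g * (1 - g)) -/e; last by ring.
  by ring.
move=> w /negP; rewrite -ltNge => few_gt.
rewrite -avg_x; apply/avg_cdf_nondecreasing/ecdf_quantile_le => //.
by rewrite ecdfE ler_pdivlMr //; have := count_le_add_gt w x; lra.
Qed.

Lemma avg_cdf_quantile_lower g L : 0 < g < 1 -> 0 < L ->
  exists2 E : set T, measurable E /\ (P E <= (expR (- L))%:E)%E &
    forall w, ~ E w ->
      g - bernstein_radius (g * (1 - g)) L n <= avg_cdf (left_quantile g (ecdf w)).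
Proof.
move=> /andP[g0 g1] L0; set e := bernstein_radius _ _ _.
have e0 : 0 < e by apply: radius_gt0 => //; apply: mulr_ge0; lra.
have [ge0|ge0] := leP (g - e) 0.
  exists set0; first by rewrite measure0 lee_fin expR_ge0.
  by move=> w _; exact: le_trans ge0 (avg_cdf_ge0 _).
have [x avg_x] : exists x, avg_cdf x = g - e by apply: avg_cdf_onto; lra.
have m_le k : measurable (le_set x k) by exact: measurable_set_le.
exists [set w | (n * g <= count_in X (le_set x) s w)%R].
  split; first exact: measurable_count_ge.
  apply: (count_bernstein indep m_le) => //; first by apply/andP; split; lra.
  by rewrite sum_prob_le avg_x.
move=> w /negP; rewrite -ltNge => few_le.
rewrite -avg_x leNgt; apply/negP => avg_q.
have qx : left_quantile g (ecdf w) < x.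
  by rewrite ltNge; apply/negP => /avg_cdf_nondecreasing; rewrite leNgt avg_q.
have [y gy yx] := ecdf_quantile_lt (ltW g1) qx.
have := le_trans gy (ecdf_nondecreasing w (ltW yx)).
by rewrite ecdfE ler_pdivlMr //; lra.
Qed.

Lemma avg_cdf_quantile_concentration g delta : 0 < g < 1 -> 0 < delta < 1 ->
  exists E : set T, measurable E /\
    E `<=` [set w | `|avg_cdf (left_quantile g (ecdf w)) - g|
                      <= bernstein_radius (g * (1 - g)) (ln (2 / delta)) n] /\
    ((1 - delta)%:E <= P E)%E.
Proof.
move=> g01 /andP[d0 d1]; set L := ln (2 / delta).
have L0 : 0 < L by rewrite ln_gt0 // ltr_pdivlMr //; lra.
have expL : expR (- L) = delta / 2.
  by rewrite expRN lnK ?invf_div // posrE divr_gt0 //; lra.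
have [E1 [mE1 PE1] upper] := avg_cdf_quantile_upper g01 L0.
have [E2 [mE2 PE2] lower] := avg_cdf_quantile_lower g01 L0.
have mE12 : measurable (E1 `|` E2) by exact: measurableU.
exists (~` (E1 `|` E2)); split; first exact: measurableC.
split.
  move=> w /= /not_orP[/upper up /lower low].
  by rewrite ler_norml; apply/andP; split; lra.
rewrite probability_setC // -[P (E1 `|` E2)]fineK ?fin_num_measure // -EFinB lee_fin.
suff : (P (E1 `|` E2) <= delta%:E)%E.
  by rewrite -[P (E1 `|` E2)]fineK ?fin_num_measure // lee_fin; lra.
apply: le_trans (measureU2 _ mE1 mE2) _.
by apply: le_trans (leeD PE1 PE2) _; rewrite expL -EFinD lee_fin; lra.
Qed.

End EmpiricalQuantile.

Section IndexPairs.
Variables (r : seq nat) (B : nat -> nat).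

Definition index_pairs : seq (nat * nat) := [seq (j, i) | j <- r, i <- iota 0 (B j)].

Lemma mem_index_pairs p : (p \in index_pairs) = (p.1 \in r) && (p.2 < B p.1)%N.
Proof.
apply/allpairsPdep/andP => [[j [i [jr + ->]]]|[p1r p2B]].
  by rewrite mem_iota.
by exists p.1, p.2; rewrite mem_iota -surjective_pairing.
Qed.

Lemma uniq_index_pairs : uniq r -> uniq index_pairs.
Proof.
move=> ur; apply: allpairs_uniq_dep => // [j _|]; first exact: iota_uniq.
by move=> [j1 i1] [j2 i2] _ _ [-> ->].
Qed.

Lemma size_index_pairs : size index_pairs = (\sum_(j <- r) B j)%N.
Proof. by rewrite size_allpairs_dep sumnE big_map; under eq_bigr do rewrite size_iota. Qed.

Lemma big_index_pairs (V : nmodType) (F : nat -> nat -> V) :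
  \sum_(p <- index_pairs) F p.1 p.2 = \sum_(j <- r) \sum_(i < B j) F j i.
Proof.
rewrite big_allpairs_dep; apply: eq_bigr => j _.
by rewrite -(big_mkord xpredT) /index_iota subn0.
Qed.

End IndexPairs.

Section Distances.
Variable R : realType.

Lemma le_sup_dist (F G : R -> R) x : (exists M, forall y, `|F y - G y| <= M) ->
  `|F x - G x| <= sup_dist F G.
Proof.
move=> [M FGM]; apply: ub_le_sup; last by exists x.
by exists M => _ [y _ <-].
Qed.

Lemma dist_avg_le (I : eqType) (s : seq I) (f : I -> R) (c e : R) : (0 < size s)%N ->
  (forall i, i \in s -> `|c - f i| <= e) ->
  `|c - (\sum_(i <- s) f i) / (size s)%:R| <= e.
Proof.
move=> s_gt0 cfe; have n_gt0 : 0 < (size s)%:R :> R by rewrite ltr0n.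
have -> : c - (\sum_(i <- s) f i) / (size s)%:R = (\sum_(i <- s) (c - f i)) / (size s)%:R.
  by rewrite sumrB sumr_const_seq -[c *+ _]mulr_natr mulrBl mulfK ?lt0r_neq0.
rewrite normrM normfV normr_nat ler_pdivrMr //.
apply: le_trans (ler_norm_sum _ _ _) _.
by rewrite mulr_natr -(sumr_const_seq s e) big_seq [leRHS]big_seq; exact: ler_sum.
Qed.

Lemma dcdf_dist_le_sup_dist (Q1 Q2 : probability R R) x :
  `|dcdf Q1 x - dcdf Q2 x| <= sup_dist (dcdf Q1) (dcdf Q2).
Proof.
apply: le_sup_dist; exists 1 => y.
have := dcdf_ge0 Q1 y; have := dcdf_le1 Q1 y.
by have := dcdf_ge0 Q2 y; have := dcdf_le1 Q2 y; rewrite ler_norml; lra.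
Qed.

Lemma avg_cdf_index_pairs_dist (Q : nat -> probability R R) r B t y :
  (0 < size (index_pairs r B))%N ->
  `|dcdf (Q t) y - avg_cdf (fun p => Q p.1) (index_pairs r B) y|
    <= \big[Num.max/0]_(j <- r) sup_dist (dcdf (Q j)) (dcdf (Q t)).
Proof.
move=> s_gt0; apply: dist_avg_le => // p; rewrite mem_index_pairs => /andP[p_r _].
rewrite distrC; apply: le_trans (dcdf_dist_le_sup_dist _ _ y) _.
exact: (le_bigmax_seq 0 p.1 xpredT (fun j => sup_dist (dcdf (Q j)) (dcdf (Q t))) p_r).
Qed.

Lemma ecdf_index_pairs d (T : measurableType d) (P : probability T R)
    (u : nat -> nat -> {RV P >-> R}) r B w x :
  ecdf (fun p => u p.1 p.2) (index_pairs r B) w x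
    = (\sum_(j <- r) \sum_(i < B j) ((u j i w <= x)%R%:R : R)) / (\sum_(j <- r) B j)%N%:R.
Proof.
by rewrite /ecdf size_index_pairs (big_index_pairs r B (fun j i => ((u j i w <= x)%R%:R : R))).
Qed.

End Distances.

Theorem theorem1 (R : realType) (d : measure_display) (T : measurableType d)
  (P : probability T R) (t : nat) (alpha : R) (Q : nat -> probability R R)
  (B : nat -> nat) (u : nat -> nat -> {RV P >-> R}) (k : nat) (delta : R) :
  (0 < t)%N -> 0 < alpha < 1 ->
  (forall j, (1 <= j <= t)%N -> continuous (dcdf (Q j))) ->
  (forall j, (1 <= j <= t)%N -> (1 <= B j)%N) ->
  (forall j i, (1 <= j <= t)%N -> (i < B j)%N ->
     forall A : set R, measurable A -> P (u j i @^-1` A) = Q j A) ->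
  mutually_independent [set ji : nat * nat | (1 <= ji.1 <= t)%N /\ (ji.2 < B ji.1)%N]
    (fun ji => u ji.1 ji.2) ->
  (1 <= k <= t)%N -> 0 < delta < 1 ->
  let Btk := (\sum_(t.+1 - k <= j < t.+1) B j)%N in
  let Fhat := fun (w : T) (x : R) =>
    (\sum_(t.+1 - k <= j < t.+1) \sum_(i < B j) ((u j i w <= x)%R%:R : R)) / Btk%:R in
  let qhat := fun w => left_quantile (1 - alpha) (Fhat w) in
  let phi := \big[Num.max/0]_(t.+1 - k <= j < t.+1) sup_dist (dcdf (Q j)) (dcdf (Q t)) in
  let psi := 5 / 4 * Num.sqrt (2 * alpha * (1 - alpha) * ln (2 / delta) / Btk%:R)
             + 4 * ln (2 / delta) / Btk%:R in
  exists E : set T, measurable E /\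
    E `<=` [set w | `|dcdf (Q t) (qhat w) - (1 - alpha)| <= phi + psi] /\
    ((1 - delta)%:E <= P E)%E.
Proof.
move=> _ /andP[a0 a1] Q_cont B_gt0 u_law indep /andP[k1 kt] d01
  Btk Fhat qhat phi psi.
set r := index_iota (t.+1 - k) t.+1; set s := index_pairs r B.
have s_I p : p \in s -> (1 <= p.1 <= t)%N /\ (p.2 < B p.1)%N.
  by rewrite mem_index_pairs mem_index_iota => /andP[? ->]; split=> //; lia.
have s_gt0 : (0 < size s)%N.
  have Bt : (0 < B t)%N by apply: B_gt0; lia.
  rewrite -has_predT; apply/hasP; exists (t, 0)%N => //.
  by rewrite mem_index_pairs mem_index_iota /= Bt andbT; lia.
have psiE : psi = bernstein_radius ((1 - alpha) * (1 - (1 - alpha)))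
                   (ln (2 / delta)) (size s)%:R.
  rewrite /psi /bernstein_radius size_index_pairs.
  by congr (5 / 4 * Num.sqrt (_ / _) + _); ring.
have X_law p : p \in s -> forall A, measurable A -> P (u p.1 p.2 @^-1` A) = Q p.1 A.
  by move=> /s_I[p_t pB]; exact: u_law.
have Q_cont' p : p \in s -> continuous (dcdf (Q p.1)) by move=> /s_I[/Q_cont].
have a01 : 0 < 1 - alpha < 1 by apply/andP; split; lra.
have [E [mE [E_good PE]]] := avg_cdf_quantile_concentration indep
  (uniq_index_pairs B (iota_uniq _ _)) s_I s_gt0 X_law Q_cont' a01 d01.
exists E; split => //; split => // w /E_good /=.
rewrite -psiE (_ : ecdf _ _ w = Fhat w); last by apply/funext => x; rewrite ecdf_index_pairs.
move=> dev; apply: le_trans (ler_distD _ _ _) (lerD _ dev).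
exact: avg_cdf_index_pairs_dist.
Qed.
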